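(* Let $f\in\mathrm{Rat}_2$. (1) If $f$ has three distinct fixed points, then $\mathrm{Aut}(f)$ acts faithfully on the fixed point set and coincides with the group of all permutations of the three fixed points which preserve multipliers; hence $|\mathrm{Aut}(f)|$ is $1$, $2$ or $6$ according as the three multipliers are pairwise distinct, exactly two are equal, or all three are equal. (2) If $f$ has exactly two distinct fixed points, then $\mathrm{Aut}(f)$ is trivial. (3) If $f$ has exactly one fixed point, then $\mathrm{Aut}(f)$ is cyclic of order two.
   Context: $\mathrm{Rat}_2$ is the space of holomorphic degree-$2$ maps of the Riemann sphere; each $f$ has three fixed points counted with multiplicity, and the multiplier of a fixed point $z_i$ is $f'(z_i)$ (in the coordinate $1/z$ at $\infty$). An automorphism of $f$ is a Möbius transformation $g$ with $g\circ f\circ g^{-1}=f$; $\mathrm{Aut}(f)$ is the group of all automorphisms of $f$. *)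

From HB Require Import structures.
From mathcomp Require Import all_boot all_order all_algebra all_fingroup.
From mathcomp Require Import reals.
From mathcomp Require Import complex.

Set Implicit Arguments.
Unset Strict Implicit.
Unset Printing Implicit Defensive.

Import Order.TTheory GRing.Theory Num.Theory.
Local Open Scope ring_scope.

(* The Riemann sphere over the complex numbers C = R[i] (R a realType):
   a point is [Some z] (z in C) or [None] (the point at infinity). *)
Definition sphere (R : realType) := option R[i].

(* A degree-2 rational map f = p/q, with p, q coprime and
   max(deg p, deg q) = 2. *)
Definition isRat2 (R : realType) (p q : {poly R[i]}) : bool :=
  coprimep p q && (maxn (size p) (size q) == 3%N).

Definition ratmap (R : realType) (p q : {poly R[i]}) (x : sphere R) : sphere R :=
  match x with
  | Some z => if q.[z] == 0 then None else Some (p.[z] / q.[z])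
  | None => if q`_2 == 0 then None else Some (p`_2 / q`_2)
  end.

Definition is_fixed (R : realType) (p q : {poly R[i]}) (x : sphere R) : Prop :=
  ratmap p q x = x.

(* Reversal of a polynomial of degree <= 2: w^2 p(1/w). *)
Definition rev2 (R : realType) (p : {poly R[i]}) : {poly R[i]} :=
  (p`_2)%:P + p`_1 *: 'X + p`_0 *: 'X^2.

Definition ratderiv (R : realType) (a b : {poly R[i]}) (z : R[i]) : R[i] :=
  (a^`() * b - a * b^`()).[z] / (b.[z]) ^+ 2.

(* The multiplier f'(x), computed in the coordinate 1/z at infinity:
   near infinity, f is conjugated by w = 1/z to w |-> rev2 q / rev2 p. *)
Definition multiplier (R : realType) (p q : {poly R[i]}) (x : sphere R) : R[i] :=
  match x with
  | Some z => ratderiv p q z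
  | None => ratderiv (rev2 q) (rev2 p) 0
  end.

Definition mobfun (R : realType) (a b c d : R[i]) (x : sphere R) : sphere R :=
  match x with
  | Some z => if c * z + d == 0 then None else Some ((a * z + b) / (c * z + d))
  | None => if c == 0 then None else Some (a / c)
  end.

Definition is_mobius (R : realType) (g : sphere R -> sphere R) : Prop :=
  exists a b c d : R[i], a * d - b * c != 0 /\ forall x, g x = mobfun a b c d x.

(* g is an automorphism of f: a Mobius map with g o f o g^-1 = f,
   i.e. g o f = f o g. *)
Definition is_aut (R : realType) (p q : {poly R[i]}) (g : sphere R -> sphere R) : Prop :=
  is_mobius g /\ forall x, g (ratmap p q x) = ratmap p q (g x).

Definition num_fixed (R : realType) (p q : {poly R[i]}) (n : nat) : Prop :=
  exists s : seq (sphere R), uniq s /\ size s = n /\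
    forall x, is_fixed p q x <-> x \in s.

Definition has_card (T : Type) (A : T -> Prop) (n : nat) : Prop :=
  exists e : 'I_n -> T, injective e /\ forall x, A x <-> exists i, x = e i.

Definition i0 : 'I_3 := @Ordinal 3 0 isT.
Definition i1 : 'I_3 := @Ordinal 3 1 isT.
Definition i2 : 'I_3 := @Ordinal 3 2 isT.

(* Homogeneous coordinates: a point of the sphere is a nonzero vector of C^2 up to scaling,
   f = p/q lifts to the quadratic map F = (y^2 p(x/y), y^2 q(x/y)) and a Mobius map to an
   invertible 2x2 matrix M.  At a fixed point F(u) = l u the multiplier mu satisfies
   det DF(u) = 2 l^2 mu, and conjugating F by M rescales l and DF by powers of det M; so
   multipliers are conjugacy invariants and automorphisms permute the fixed points
   preserving multipliers.
   (1) Moving three fixed points to 0, oo, 1 puts f in the normal form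
   z (mu0 + a z) / (1 + muI a z) with a = (1 - mu0) / (1 - muI), determined by the
   multipliers at 0 and oo.  Hence the Mobius map realizing a multiplier-preserving
   permutation of the fixed points conjugates f to itself, and an automorphism is
   determined by the permutation it induces, as a Mobius map fixing three points is the
   identity.
   (2) With fixed points 0 and oo, exactly one of them is a double fixed point, of
   multiplier 1, so an automorphism fixes both; it is then z |-> k z, and commuting with f
   forces k = 1.
   (3) With oo the only fixed point, f(z) = z + p0 / (p1 + p2 z); an automorphism fixes oo,
   hence is affine, and commuting with f leaves only the identity and the reflection of C
   in the pole of f. *)

From HB Require Import structures.
From mathcomp Require Import all_boot all_order all_algebra all_fingroup.
From mathcomp Require Import reals.
From mathcomp Require Import complex.
From mathcomp Require Import ring.
From Stdlib Require Import FunctionalExtensionality IndefiniteDescription.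
Import Order.TTheory GRing.Theory Num.Theory.
Set Implicit Arguments.
Unset Strict Implicit.
Unset Printing Implicit Defensive.
Local Open Scope ring_scope.

(** * Permutations preserving a labelling *)

Section PermPreserving.
Variables (T : finType) (Y : eqType) (m : T -> Y).

Definition perm_preserving := [set s : {perm T} | [forall i, m (s i) == m i]].

Lemma perm_preservingP (s : {perm T}) :
  reflect (forall i, m (s i) = m i) (s \in perm_preserving).
Proof. by rewrite inE; apply: (iffP forallP) => h i; apply/eqP. Qed.

(* The m-preserving permutations are exactly those supported on A. *)
Lemma card_perm_preserving (A : {set T}) :
  {in A &, forall i j, m i = m j} -> (forall i j, i \notin A -> m j = m i -> j = i) ->
  #|perm_preserving| = #|A|`!.
Proof.
move=> m_const m_single; rewrite -card_perm; apply: eq_card => s.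
apply/perm_preservingP/idP => [ms|sA i].
  by apply/subsetP => i; apply: contraNT => iA; apply/eqP/m_single.
have [iA|/(out_perm sA) -> //] := boolP (i \in A); apply: m_const => //.
apply: contraT => siA; have := out_perm sA siA.
by move/perm_inj => si; move: siA; rewrite si iA.
Qed.

End PermPreserving.

Section FaithfulAction.
Variables (T : finType) (X : eqType) (A : (X -> X) -> Prop) (z : T -> X).
Variable S : {set {perm T}}.
Hypothesis z_inj : injective z.
Hypothesis A_inj : forall g, A g -> injective g.
Hypothesis A_stable : forall g, A g -> forall i, exists j, g (z i) = z j.
Hypothesis A_faithful : forall g g', A g -> A g' -> (forall i, g (z i) = g' (z i)) -> g = g'.
Hypothesis A_perms :
  forall s : {perm T}, (exists g, A g /\ forall i, g (z i) = z (s i)) <-> s \in S.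

Lemma perm_of_action g : A g -> exists2 s, s \in S & forall i, g (z i) = z (s i).
Proof.
move=> Ag; pose sg i := odflt i [pick j | g (z i) == z j].
have sgE i : g (z i) = z (sg i).
  rewrite /sg; case: pickP => [j /eqP //|none].
  by have [j gzj] := A_stable Ag i; move: (none j); rewrite gzj eqxx.
have sg_inj : injective sg by move=> i j e; apply/z_inj/(A_inj Ag); rewrite !sgE e.
exists (perm sg_inj) => [|i]; last by rewrite permE.
by apply/A_perms; exists g; split => // i; rewrite permE.
Qed.

Lemma has_card_action : has_card A #|S|.
Proof.
have act (s : {perm T}) : exists g, s \in S -> A g /\ forall i, g (z i) = z (s i).
  have [/A_perms [g gs]|_] := boolP (s \in S); first by exists g.
  by exists id.
pose G s := proj1_sig (constructive_indefinite_description _ (act s)).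
have GP s : s \in S -> A (G s) /\ forall i, G s (z i) = z (s i).
  by rewrite /G; case: constructive_indefinite_description.
exists (fun k => G (enum_val k)); split.
  move=> k k' e; apply/enum_val_inj/permP => i; apply: z_inj.
  by have [[_ <-] [_ <-]] := (GP _ (enum_valP k), GP _ (enum_valP k')); rewrite e.
move=> g; split => [Ag|[k ->]]; last by case: (GP _ (enum_valP k)).
have [s sS gs] := perm_of_action Ag; exists (enum_rank_in sS s); rewrite enum_rankK_in //.
have [AGs GsE] := GP _ sS; apply: A_faithful => // i.
by rewrite gs GsE.
Qed.

End FaithfulAction.

Lemma ord3P (i : 'I_3) : [\/ i = i0, i = i1 | i = i2].
Proof.
by case: i => -[|[|[|]]] // ?; [apply: Or31 | apply: Or32 | apply: Or33]; apply: val_inj.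
Qed.

Lemma inj3_neq (X : eqType) (z : 'I_3 -> X) : injective z ->
  [/\ z i0 != z i1, z i0 != z i2 & z i1 != z i2].
Proof. by move=> z_inj; rewrite !(inj_eq z_inj). Qed.

Section PermPreserving3.
Variables (Y : eqType) (m : 'I_3 -> Y).

Lemma card_perm_preserving3_distinct : m i0 <> m i1 -> m i1 <> m i2 -> m i0 <> m i2 ->
  #|perm_preserving m| = 1%N.
Proof.
move=> m01 m12 m02; rewrite (card_perm_preserving (A := set0)) ?cards0 //.
  by move=> i j; rewrite inE.
by move=> i j _; case: (ord3P i) => ->; case: (ord3P j) => -> // /esym.
Qed.

Lemma card_perm_preserving3_const : m i0 = m i1 -> m i1 = m i2 -> #|perm_preserving m| = 6%N.
Proof.
move=> m01 m12; rewrite (card_perm_preserving (A := setT)) ?cardsT ?card_ord //.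
  by move=> i j _ _; case: (ord3P i) => ->; case: (ord3P j) => ->; rewrite ?m01 ?m12.
by move=> i j; rewrite inE.
Qed.

Lemma card_perm_preserving3_pair (c : 'I_3) :
  (forall i j, i != c -> j != c -> m i = m j) -> (forall i, i != c -> m i <> m c) ->
  #|perm_preserving m| = 2%N.
Proof.
move=> m_const m_sep; rewrite (card_perm_preserving (A := [set~ c])) ?cardsC1 ?card_ord //.
  by move=> i j; rewrite !in_setC1; apply: m_const.
move=> i j; rewrite in_setC1 negbK => /eqP -> mjc.
by apply/eqP/negPn/negP => /m_sep /(_ mjc).
Qed.

Lemma card_perm_preserving3_two : (m i0 = m i1 \/ m i1 = m i2 \/ m i0 = m i2) ->
  ~ (m i0 = m i1 /\ m i1 = m i2) -> #|perm_preserving m| = 2%N.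
Proof.
case=> [e|[e|e]] m_nconst; [apply: (card_perm_preserving3_pair (c := i2))
  | apply: (card_perm_preserving3_pair (c := i0)) | apply: (card_perm_preserving3_pair (c := i1))].
all: try by move=> i j; case: (ord3P i) => ->; case: (ord3P j) => -> //; congruence.
all: by move=> i; case: (ord3P i) => -> // _ ?; apply: m_nconst; split; congruence.
Qed.

End PermPreserving3.

(** * Polynomials *)

Section VanishingPolynomials.
Variable F : numDomainType.

Lemma poly_horner_eq0 (r : {poly F}) : (forall z, r.[z] = 0) -> r = 0.
Proof.
move=> r0; apply: (@roots_geq_poly_eq0 _ r [seq i%:R | i <- iota 0 (size r)]).
- by apply/allP => _ /mapP [i _ ->]; apply/rootP.
- by rewrite map_inj_uniq ?iota_uniq // => i j /eqP; rewrite eqr_nat => /eqP.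
- by rewrite size_map size_iota.
Qed.

Lemma quartic_coef_eq0 (e0 e1 e2 e3 e4 : F) :
  (forall z, e0 + e1 * z + e2 * z ^+ 2 + e3 * z ^+ 3 + e4 * z ^+ 4 = 0) ->
  [/\ e0 = 0, e1 = 0, e2 = 0, e3 = 0 & e4 = 0].
Proof.
pose P : {poly F} := e0%:P + e1 *: 'X + e2 *: 'X^2 + e3 *: 'X^3 + e4 *: 'X^4.
move=> vanish; have P0 : P = 0.
  by apply: poly_horner_eq0 => z; rewrite !(hornerD, hornerZ, hornerXn, hornerX, hornerC) vanish.
have c i : P`_i = 0 by rewrite P0 coef0.
move: (c 0%N) (c 1%N) (c 2%N) (c 3%N) (c 4%N).
by rewrite !coefD !coefZ !coefC !coefX !coefXn /= !mulr0 !mulr1 !addr0 !add0r.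
Qed.

End VanishingPolynomials.

Section RatTwo.
Variable R : realType.
Local Notation C := R[i].
Local Notation sph := (sphere R).
Implicit Types (p q r : {poly C}) (x y : sph).

Definition quadp (c0 c1 c2 : C) : {poly C} := c0%:P + c1 *: 'X + c2 *: 'X^2.

Lemma coef_quadp c0 c1 c2 i : (quadp c0 c1 c2)`_i =
  if i == 0%N then c0 else if i == 1%N then c1 else if i == 2%N then c2 else 0.
Proof.
rewrite /quadp !coefD coefC coefZ coefX coefZ coefXn.
by case: i => [|[|[|i]]] /=; rewrite ?mulr0 ?mulr1 ?addr0 ?add0r.
Qed.

Lemma size_quadp c0 c1 c2 : (size (quadp c0 c1 c2) <= 3)%N.
Proof. by apply/leq_sizeP => -[|[|[|j]]] //; rewrite coef_quadp. Qed.

Lemma quadpE r : (size r <= 3)%N -> r = quadp r`_0 r`_1 r`_2.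
Proof.
move=> hr; apply/polyP => -[|[|[|j]]]; rewrite coef_quadp //=.
by rewrite nth_default // (leq_trans hr).
Qed.

Lemma scale_quadp k c0 c1 c2 : k *: quadp c0 c1 c2 = quadp (k * c0) (k * c1) (k * c2).
Proof. by rewrite /quadp !scalerDr !scalerA scale_polyC. Qed.

Lemma horner_quadp c0 c1 c2 z : (quadp c0 c1 c2).[z] = c0 + c1 * z + c2 * z ^+ 2.
Proof. by rewrite /quadp !hornerE. Qed.

Lemma horner_deriv_quadp c0 c1 c2 z : (quadp c0 c1 c2)^`().[z] = c1 + 2 * c2 * z.
Proof. rewrite /quadp !derivE !hornerE /=; ring. Qed.

Lemma horner_size3 r z : (size r <= 3)%N -> r.[z] = r`_0 + r`_1 * z + r`_2 * z ^+ 2.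
Proof. by move=> hr; rewrite {1}(quadpE hr) horner_quadp. Qed.

Lemma horner_deriv_size3 r z : (size r <= 3)%N -> r^`().[z] = r`_1 + 2 * r`_2 * z.
Proof. by move=> hr; rewrite {1}(quadpE hr) horner_deriv_quadp. Qed.

Lemma is_fixed_None p q : is_fixed p q None <-> q`_2 = 0.
Proof. by rewrite /is_fixed /=; case: ifP => /eqP. Qed.

Lemma is_fixed_Some p q z : is_fixed p q (Some z) <-> q.[z] != 0 /\ p.[z] = z * q.[z].
Proof.
rewrite /is_fixed /=; case: ifP => [/eqP ->|/negbT qz0]; first by split=> // -[].
split => [[pz]|[_ ->]]; last by rewrite mulfK.
by split => //; rewrite -{2}pz divfK.
Qed.

Lemma is_fixed_morph p q p' q' (g : sph -> sph) x :
  {morph g : y / ratmap p q y >-> ratmap p' q' y} -> is_fixed p q x -> is_fixed p' q' (g x).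
Proof. by move=> gf fx; rewrite /is_fixed -gf fx. Qed.

(** * Homogeneous coordinates *)

Definition vec := (C * C)%type.
Implicit Types (u w : vec).

Definition nzvec u := (u.1 != 0) || (u.2 != 0).
Definition scalev (t : C) u : vec := (t * u.1, t * u.2).
Definition cross u w := u.1 * w.2 - u.2 * w.1.
Definition lift x : vec := if x is Some z then (z, 1) else (1, 0).
Definition point u : sph := if u.2 == 0 then None else Some (u.1 / u.2).

(* The binary quadratic form y^2 r(x/y) and the lift (x : y) |-> (y^2 p(x/y) : y^2 q(x/y))
   of p/q to C^2. *)
Definition hom r u := r`_0 * u.2 ^+ 2 + r`_1 * u.1 * u.2 + r`_2 * u.1 ^+ 2.
Definition hmap p q u : vec := (hom p u, hom q u).

Lemma point_lift x : point (lift x) = x.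
Proof. by case: x => [z|]; rewrite /point /= ?oner_eq0 ?eqxx ?divr1. Qed.

Lemma nzvec_lift x : nzvec (lift x).
Proof. by case: x => [z|]; rewrite /nzvec /= oner_neq0 ?orbT. Qed.

Lemma nzvecN u : ~~ nzvec u -> u = (0, 0).
Proof. by case: u => a b; rewrite /nzvec /= negb_or !negbK => /andP [/eqP -> /eqP ->]. Qed.

Lemma point_scalev t u : t != 0 -> point (scalev t u) = point u.
Proof.
move=> t0; rewrite /point /= mulf_eq0 (negbTE t0) /=.
by case: ifP => // /negbT u2; congr Some; field; rewrite t0 u2.
Qed.

Lemma lift_point u : nzvec u -> exists2 t, t != 0 & lift (point u) = scalev t u.
Proof.
case: u => a b; rewrite /nzvec /point /=.
have [->|b0] /= := eqVneq b 0 => [a0|_].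
  rewrite orbF in a0.
  by exists a^-1; rewrite ?invr_eq0 // /scalev /= mulVf // mulr0.
by exists b^-1; rewrite ?invr_eq0 // /scalev /= mulVf // mulrC.
Qed.

Lemma point_eq_cross u w : nzvec u -> nzvec w -> (point u = point w <-> cross u w = 0).
Proof.
case: u w => a b [c d]; rewrite /nzvec /point /cross /=.
have [->|b0] := eqVneq b 0; have [->|d0] := eqVneq d 0 => //= u0 w0.
- by rewrite !mul0r mulr0 subrr.
- rewrite mul0r subr0; split=> // /eqP; rewrite orbF in u0.
  by rewrite mulf_eq0 (negbTE u0) (negbTE d0).
- rewrite mulr0 sub0r; split=> // /eqP; rewrite orbF in w0.
  by rewrite oppr_eq0 mulf_eq0 (negbTE w0) (negbTE b0).
split => [[/eqP]|/eqP]; first by rewrite (eqr_div _ _ b0 d0) => /eqP ->; ring.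
rewrite subr_eq0 => /eqP e; congr Some.
by apply/eqP; rewrite (eqr_div _ _ b0 d0) e mulrC.
Qed.

Lemma point_eq_lift u x : nzvec u -> cross u (lift x) = 0 -> point u = x.
Proof. by move=> u0 ux; rewrite -(point_lift x); apply/point_eq_cross => //; apply: nzvec_lift. Qed.

Lemma cross_lift_neq0 x y : x != y -> cross (lift x) (lift y) != 0.
Proof.
apply: contraNneq => /(point_eq_cross (nzvec_lift x) (nzvec_lift y)).2.
by rewrite !point_lift => ->.
Qed.

Lemma hom_lift r z : (size r <= 3)%N -> hom r (z, 1) = r.[z].
Proof. by move=> hr; rewrite /hom horner_size3 //=; ring. Qed.

Lemma hmap_inf p q : hmap p q (1, 0) = (p`_2, q`_2).
Proof. by rewrite /hmap /hom /=; congr pair; ring. Qed.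

Lemma hmap_scalev p q t u : hmap p q (scalev t u) = scalev (t ^+ 2) (hmap p q u).
Proof. by rewrite /hmap /hom /scalev /=; congr pair; ring. Qed.

Lemma hmap_scalep p q k u : hmap (k *: p) (k *: q) u = scalev k (hmap p q u).
Proof. by rewrite /hmap /hom /scalev !coefZ /=; congr pair; ring. Qed.

Lemma ratmapE p q x : (size p <= 3)%N -> (size q <= 3)%N ->
  ratmap p q x = point (hmap p q (lift x)).
Proof.
move=> hp hq; case: x => [z|]; first by rewrite /= /hmap !hom_lift.
by rewrite hmap_inf.
Qed.

(* The form of [isRat2] used below: the homogeneous lift vanishes only at the origin. *)
Definition proper p q := [/\ (size p <= 3)%N, (size q <= 3)%N &
  forall u, nzvec u -> nzvec (hmap p q u)].

Lemma nzvec_hmap p q u : proper p q -> nzvec u -> nzvec (hmap p q u).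
Proof. by case=> _ _; apply. Qed.

Lemma proper_inf p q : proper p q -> (p`_2 != 0) || (q`_2 != 0).
Proof. by move=> pq; have := nzvec_hmap pq (nzvec_lift None); rewrite /= hmap_inf. Qed.

Lemma isRat2_proper p q : isRat2 p q -> proper p q.
Proof.
case/andP=> pq /eqP size_pq.
have hp : (size p <= 3)%N by rewrite -size_pq leq_maxl.
have hq : (size q <= 3)%N by rewrite -size_pq leq_maxr.
split=> // -[x y]; rewrite /nzvec /=; have [->|y0] /= := eqVneq y 0 => [x0|_].
  have lead2 r : (size r <= 3)%N -> r`_2 = 0 -> (size r < 3)%N.
    move=> hr r2; rewrite ltn_neqAle hr andbT; apply/eqP => rs.
    move: r2; rewrite -[2%N]/(3.-1)%N -rs -lead_coefE => /eqP.
    by rewrite lead_coef_eq0 => /eqP r0; move: rs; rewrite r0 size_poly0.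
  rewrite orbF in x0; have hom_inf r : hom r (x, 0) = r`_2 * x ^+ 2 by rewrite /hom /=; ring.
  rewrite !hom_inf !mulf_eq0 (negbTE x0) /= !orbF -negb_and.
  apply/negP => /andP [/eqP p2 /eqP q2]; move: size_pq; apply/eqP.
  by rewrite neq_ltn gtn_max (lead2 _ hp p2) (lead2 _ hq q2).
have hom_aff r : (size r <= 3)%N -> hom r (x, y) = y ^+ 2 * r.[x / y].
  by move=> hr; rewrite horner_size3 // /hom /=; field.
rewrite !hom_aff // !mulf_eq0 (negbTE y0) /= -negb_and.
apply/negP => /andP [px qx].
by move: (coprimep_root pq px); rewrite (eqP qx) eqxx.
Qed.

Lemma proper_coprimep p q : proper p q -> coprimep p q.
Proof.
case=> hp hq pq; apply: Pdiv.ClosedField.root_coprimep => z /eqP pz.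
move: (pq (z, 1)); rewrite /nzvec /hmap /= !hom_lift // oner_neq0 orbT pz eqxx.
by move=> /(_ isT).
Qed.

Lemma proper_neq0 p q : proper p q -> p != 0.
Proof.
move=> pq; apply/negP => /eqP p0; have := proper_inf pq.
move: (proper_coprimep pq); rewrite p0 coprime0p -size_poly_eq1 => /eqP q1.
by rewrite coef0 (nth_default 0 (_ : size q <= 2)%N) ?q1 // eqxx.
Qed.

Lemma ratmap_pointv p q u : proper p q -> nzvec u -> ratmap p q (point u) = point (hmap p q u).
Proof.
case=> hp hq _ u0; rewrite ratmapE //.
have [t t0 ->] := lift_point u0.
by rewrite hmap_scalev point_scalev // expf_neq0.
Qed.

Lemma ratmap_scalep p q k x : (size p <= 3)%N -> (size q <= 3)%N -> k != 0 ->
  ratmap (k *: p) (k *: q) x = ratmap p q x.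
Proof. by move=> hp hq k0; rewrite !ratmapE ?size_scale // hmap_scalep point_scalev. Qed.

Lemma is_fixed_of_eq p q z : proper p q -> p.[z] = z * q.[z] -> is_fixed p q (Some z).
Proof.
move=> pq pz; apply/is_fixed_Some; split => //; apply/negP => /eqP qz.
have [hp hq _] := pq; have := nzvec_hmap pq (nzvec_lift (Some z)).
by rewrite /nzvec /hmap /= !hom_lift // pz qz mulr0 eqxx.
Qed.

(** * Mobius maps and conjugation *)

Record mob := Mob { ma : C; mb : C; mc : C; md : C }.
Implicit Types (m n : mob).

Definition mobf m : sph -> sph := mobfun (ma m) (mb m) (mc m) (md m).
Definition mob_det m := ma m * md m - mb m * mc m.
Definition mobv m u : vec := (ma m * u.1 + mb m * u.2, mc m * u.1 + md m * u.2).
Definition mob_mul m n := Mob (ma m * ma n + mb m * mc n) (ma m * mb n + mb m * md n)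
  (mc m * ma n + md m * mc n) (mc m * mb n + md m * md n).
Definition mob_adj m := Mob (md m) (- mb m) (- mc m) (ma m).
Definition mob1 := Mob 1 0 0 1.

Lemma is_mobiusP (g : sph -> sph) : is_mobius g <-> exists2 m, mob_det m != 0 & g =1 mobf m.
Proof.
split; first by case=> a [b [c [d [abcd g_eq]]]]; exists (Mob a b c d).
by case=> -[a b c d] abcd g_eq; exists a, b, c, d.
Qed.

Lemma mobfE m x : mobf m x = point (mobv m (lift x)).
Proof. by case: x => [z|]; rewrite /mobf /point /mobv /= !mulr1 ?mulr0 ?addr0. Qed.

Lemma mobv_scalev m t u : mobv m (scalev t u) = scalev t (mobv m u).
Proof. by rewrite /mobv /scalev /=; congr pair; ring. Qed.

Lemma mobv_mul m n u : mobv (mob_mul m n) u = mobv m (mobv n u).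
Proof. by rewrite /mobv /=; congr pair; ring. Qed.

Lemma mobv_adjl m u : mobv (mob_adj m) (mobv m u) = scalev (mob_det m) u.
Proof. by rewrite /mobv /scalev /mob_det /=; congr pair; ring. Qed.

Lemma mobv_adjr m u : mobv m (mobv (mob_adj m) u) = scalev (mob_det m) u.
Proof. by rewrite /mobv /scalev /mob_det /=; congr pair; ring. Qed.

Lemma mobv1 u : mobv mob1 u = u.
Proof. by case: u => a b; rewrite /mobv /=; congr pair; ring. Qed.

Lemma mob_det_mul m n : mob_det (mob_mul m n) = mob_det m * mob_det n.
Proof. by rewrite /mob_det /=; ring. Qed.

Lemma mob_det_adj m : mob_det (mob_adj m) = mob_det m.
Proof. by rewrite /mob_det /=; ring. Qed.

Lemma mob_det1 : mob_det mob1 = 1.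
Proof. by rewrite /mob_det /=; ring. Qed.

Lemma nzvec_mobv m u : mob_det m != 0 -> nzvec u -> nzvec (mobv m u).
Proof.
move=> m0; apply: contraTT => /nzvecN mu0.
have := mobv_adjl m u; rewrite mu0 /mobv /scalev /= !mulr0 !addr0.
case=> /esym/eqP; rewrite mulf_eq0 (negbTE m0) => /= u1 /esym/eqP.
by rewrite mulf_eq0 (negbTE m0) /= /nzvec u1 => ->.
Qed.

Lemma mobf_pointv m u : nzvec u -> mobf m (point u) = point (mobv m u).
Proof.
move=> u0; rewrite mobfE.
by have [t t0 ->] := lift_point u0; rewrite mobv_scalev point_scalev.
Qed.

Lemma mobf_mul m n x : mob_det n != 0 -> mobf m (mobf n x) = mobf (mob_mul m n) x.
Proof.
by move=> n0; rewrite [mobf n x]mobfE mobf_pointv ?nzvec_mobv ?nzvec_lift // mobfE mobv_mul.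
Qed.

Lemma mobf1 x : mobf mob1 x = x.
Proof. by rewrite mobfE mobv1 point_lift. Qed.

Lemma mobf_adjK m : mob_det m != 0 -> cancel (mobf m) (mobf (mob_adj m)).
Proof.
by move=> m0 x; rewrite mobf_mul // mobfE mobv_mul mobv_adjl point_scalev // point_lift.
Qed.

Lemma mobf_Kadj m : mob_det m != 0 -> cancel (mobf (mob_adj m)) (mobf m).
Proof.
move=> m0 x; rewrite mobf_mul ?mob_det_adj // mobfE mobv_mul mobv_adjr.
by rewrite point_scalev // point_lift.
Qed.

Lemma mobf_inj m : mob_det m != 0 -> injective (mobf m).
Proof. by move/mobf_adjK/can_inj. Qed.

Lemma cross_mobv_fixed m x : mob_det m != 0 -> mobf m x = x -> cross (mobv m (lift x)) (lift x) = 0.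
Proof.
move=> m0 mx; apply/point_eq_cross; rewrite ?nzvec_mobv ?nzvec_lift //.
by rewrite point_lift -mobfE.
Qed.

Lemma mobf_scale m m' k : k != 0 -> (forall u, mobv m' u = scalev k (mobv m u)) -> mobf m' = mobf m.
Proof.
by move=> k0 mm'; apply: functional_extensionality => x; rewrite !mobfE mm' point_scalev.
Qed.

Lemma mobf_fixed0 m : mobf m (Some 0) = Some 0 -> mb m = 0.
Proof.
rewrite /mobf /= !mulr0 !add0r; case: ifP => // /negbT d0 [/eqP].
by rewrite mulf_eq0 invr_eq0 (negbTE d0) orbF => /eqP.
Qed.

Lemma mobf_fixed_inf m : mobf m None = None -> mc m = 0.
Proof. by rewrite /mobf /=; case: ifP => // /eqP. Qed.

Definition pullback m r := quadp
  (ma m ^+ 2 * r`_0 - ma m * mb m * r`_1 + mb m ^+ 2 * r`_2)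
  (- (2 * ma m * mc m * r`_0) + (ma m * md m + mb m * mc m) * r`_1 - 2 * mb m * md m * r`_2)
  (mc m ^+ 2 * r`_0 - mc m * md m * r`_1 + md m ^+ 2 * r`_2).

(* The pair lifting mobf m \o ratmap p q \o (mobf m)^-1. *)
Definition conjp m p q := ma m *: pullback m p + mb m *: pullback m q.
Definition conjq m p q := mc m *: pullback m p + md m *: pullback m q.

Lemma hom_pullback m r u : hom (pullback m r) u = hom r (mobv (mob_adj m) u).
Proof. by rewrite /hom /pullback !coef_quadp /=; ring. Qed.

Lemma hom_comb (a b : C) r r' u : hom (a *: r + b *: r') u = a * hom r u + b * hom r' u.
Proof. by rewrite /hom !coefD !coefZ; ring. Qed.

Lemma hmap_conj m p q u :
  hmap (conjp m p q) (conjq m p q) u = mobv m (hmap p q (mobv (mob_adj m) u)).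
Proof. by rewrite /hmap !hom_comb !hom_pullback. Qed.

Lemma size_comb3 (a b : C) r r' : (size r <= 3)%N -> (size r' <= 3)%N ->
  (size (a *: r + b *: r')%R <= 3)%N.
Proof.
move=> hr hr'; rewrite (leq_trans (size_polyD _ _)) // geq_max.
by rewrite !(leq_trans (size_scale_leq _ _)).
Qed.

Lemma proper_conj m p q : proper p q -> mob_det m != 0 -> proper (conjp m p q) (conjq m p q).
Proof.
move=> pq m0; split; rewrite ?size_comb3 ?size_quadp // => u u0.
by rewrite hmap_conj nzvec_mobv ?nzvec_hmap ?nzvec_mobv ?mob_det_adj.
Qed.

Lemma morph_of_hmap m p q p' q' k : proper p q -> proper p' q' -> mob_det m != 0 -> k != 0 ->
  (forall u, hmap p' q' (mobv m u) = scalev k (mobv m (hmap p q u))) ->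
  {morph mobf m : x / ratmap p q x >-> ratmap p' q' x}.
Proof.
move=> pq pq' m0 k0 hF x; rewrite -[x]point_lift.
rewrite ratmap_pointv ?nzvec_lift // !mobf_pointv ?nzvec_hmap ?nzvec_lift //.
by rewrite ratmap_pointv ?nzvec_mobv ?nzvec_lift // hF point_scalev.
Qed.

Lemma cross_of_morph m p q p' q' : proper p q -> proper p' q' -> mob_det m != 0 ->
  {morph mobf m : x / ratmap p q x >-> ratmap p' q' x} ->
  forall u, cross (mobv m (hmap p q u)) (hmap p' q' (mobv m u)) = 0.
Proof.
move=> pq pq' m0 mf u; have [u0|/nzvecN ->] := boolP (nzvec u); last first.
  by rewrite /cross /mobv /hmap /hom /=; ring.
apply/point_eq_cross; rewrite ?nzvec_mobv ?nzvec_hmap ?nzvec_mobv //.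
rewrite -(mobf_pointv m (nzvec_hmap pq u0)) -ratmap_pointv // mf.
by rewrite mobf_pointv // ratmap_pointv ?nzvec_mobv.
Qed.

Lemma morph_conj m p q : proper p q -> mob_det m != 0 ->
  {morph mobf m : x / ratmap p q x >-> ratmap (conjp m p q) (conjq m p q) x}.
Proof.
move=> pq m0; apply: (morph_of_hmap (k := mob_det m ^+ 2)) => //.
- exact: proper_conj.
- by rewrite expf_neq0.
by move=> u; rewrite hmap_conj mobv_adjl hmap_scalev mobv_scalev.
Qed.

Lemma ratmap_eq_scale p q p' q' : proper p q -> proper p' q' -> ratmap p q =1 ratmap p' q' ->
  exists2 k, k != 0 & p' = k *: p /\ q' = k *: q.
Proof.
move=> pq pq' f_eq.
have mf : {morph mobf mob1 : x / ratmap p q x >-> ratmap p' q' x} by move=> x; rewrite !mobf1.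
have [[hp hq _] [hp' hq' _]] := (pq, pq').
have pq'_qp' : p * q' = q * p'.
  apply/eqP; rewrite -subr_eq0; apply/eqP/poly_horner_eq0 => z.
  have := cross_of_morph pq pq' _ mf (z, 1); rewrite mob_det1 oner_neq0 !mobv1 => /(_ isT).
  by rewrite /cross /hmap /= !hom_lift // !hornerE.
have [cop cop'] := (proper_coprimep pq, proper_coprimep pq').
have /dvdpP [r p'_eq] : p %| p' by rewrite -(Gauss_dvdpr _ cop) -pq'_qp' dvdp_mulr.
have q'_eq : q' = r * q.
  by apply: (mulfI (proper_neq0 pq)); rewrite pq'_qp' p'_eq; ring.
have : r %= 1 by move/coprimepP: cop'; apply; rewrite ?p'_eq ?q'_eq dvdp_mulr.
rewrite -size_poly_eq1 => /size_poly1P [k k0 r_eq].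
by exists k => //; rewrite p'_eq q'_eq r_eq !mul_polyC.
Qed.

(** * Multipliers *)

Definition jacobian p q u :=
  (p`_1 * u.2 + 2 * p`_2 * u.1) * (2 * q`_0 * u.2 + q`_1 * u.1)
  - (2 * p`_0 * u.2 + p`_1 * u.1) * (q`_1 * u.2 + 2 * q`_2 * u.1).

(* Euler's relation DF(u) u = 2 F(u) = 2 l u makes 2 l an eigenvalue of the Jacobian
   matrix DF(u) at a fixed point; the other eigenvalue is l * mu, so det DF(u) = 2 l^2 mu. *)
Definition fixed_vec p q u (l mu : C) :=
  [/\ hmap p q u = scalev l u, l != 0 & 2 * l ^+ 2 * mu = jacobian p q u].

Lemma multiplier_fixed_vec p q x : proper p q -> is_fixed p q x ->
  exists l, fixed_vec p q (lift x) l (multiplier p q x).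
Proof.
move=> pq; have [hp hq _] := pq; case: x => [z|].
  move/is_fixed_Some => [qz0 pz]; exists q.[z]; split => //.
    by rewrite /hmap /scalev !hom_lift //= pz mulr1 mulrC.
  rewrite /= /ratderiv hornerD hornerN !hornerM !horner_deriv_size3 //.
  by move: qz0; rewrite !horner_size3 // /jacobian /= => qz0; field.
move/is_fixed_None => q2; have p2 : p`_2 != 0 by have := proper_inf pq; rewrite q2 eqxx orbF.
exists p`_2; split => //; first by rewrite /= hmap_inf /scalev /= q2 mulr1 mulr0.
rewrite /= /ratderiv /rev2 hornerD hornerN !hornerM.
rewrite -[_%:P + _ *: 'X + _ *: 'X^2]/(quadp _ _ _) !horner_deriv_quadp !horner_quadp.
by rewrite /jacobian /= q2; field.
Qed.

Lemma fixed_vec_scalev p q u l mu t : t != 0 ->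
  fixed_vec p q u l mu -> fixed_vec p q (scalev t u) (t * l) mu.
Proof.
move=> t0 [Fu l0 J]; split; rewrite ?mulf_neq0 //.
  by rewrite hmap_scalev Fu /scalev /=; congr pair; ring.
have -> : jacobian p q (scalev t u) = t ^+ 2 * jacobian p q u by rewrite /jacobian /=; ring.
by rewrite -J; ring.
Qed.

Lemma fixed_vec_scalep p q u l mu k : k != 0 ->
  fixed_vec p q u l mu -> fixed_vec (k *: p) (k *: q) u (k * l) mu.
Proof.
move=> k0 [Fu l0 J]; split; rewrite ?mulf_neq0 //.
  by rewrite hmap_scalep Fu /scalev /=; congr pair; ring.
have -> : jacobian (k *: p) (k *: q) u = k ^+ 2 * jacobian p q u by rewrite /jacobian !coefZ; ring.
by rewrite -J; ring.
Qed.

Lemma jacobian_conj m p q u :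
  jacobian (conjp m p q) (conjq m p q) (mobv m u) = mob_det m ^+ 4 * jacobian p q u.
Proof.
by rewrite /jacobian /conjp /conjq /pullback !coefD !coefZ !coef_quadp /= /mob_det; ring.
Qed.

Lemma fixed_vec_conj m p q u l mu : mob_det m != 0 -> fixed_vec p q u l mu ->
  fixed_vec (conjp m p q) (conjq m p q) (mobv m u) (mob_det m ^+ 2 * l) mu.
Proof.
move=> m0 [Fu l0 J]; split; rewrite ?mulf_neq0 ?expf_neq0 //.
  by rewrite hmap_conj mobv_adjl hmap_scalev Fu !mobv_scalev /scalev /=; congr pair; ring.
by rewrite jacobian_conj -J; ring.
Qed.

Lemma fixed_vec_uniq p q u l mu l' mu' : nzvec u ->
  fixed_vec p q u l mu -> fixed_vec p q u l' mu' -> mu = mu'.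
Proof.
move=> u0 [Fu l0 J] [Fu' _ J']; have ll' : l = l'.
  move: Fu'; rewrite Fu /scalev; case: u u0 {Fu J J'} => a b /= /orP u0 [la lb].
  by case: u0 => [a0|b0]; [apply: (mulIf a0) | apply: (mulIf b0)].
have l20 : 2 * l ^+ 2 != 0 by rewrite mulf_neq0 ?expf_neq0 // pnatr_eq0.
by apply: (mulfI l20); rewrite J ll' J'.
Qed.

(* The chain rule: the conjugate pair is proportional to (p', q') by [ratmap_eq_scale],
   and [fixed_vec_conj] transports the multiplier. *)
Lemma multiplier_morph m p q p' q' x : proper p q -> proper p' q' -> mob_det m != 0 ->
  {morph mobf m : y / ratmap p q y >-> ratmap p' q' y} ->
  is_fixed p q x -> multiplier p' q' (mobf m x) = multiplier p q x.
Proof.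
move=> pq pq' m0 mf fx.
have same : ratmap (conjp m p q) (conjq m p q) =1 ratmap p' q'.
  by move=> y; rewrite -[y](mobf_Kadj m0) -morph_conj // mf.
have [k k0 [p'E q'E]] := ratmap_eq_scale (proper_conj pq m0) pq' same.
have [l /(fixed_vec_conj m0)/(fixed_vec_scalep k0)] := multiplier_fixed_vec pq fx.
rewrite -p'E -q'E => Fx.
have fmx := is_fixed_morph mf fx.
have [l' Fmx] := multiplier_fixed_vec pq' fmx.
have [t t0 lift_mx] := lift_point (nzvec_mobv m0 (nzvec_lift x)).
rewrite -mobfE in lift_mx.
have := fixed_vec_scalev t0 Fx; rewrite -lift_mx.
exact: fixed_vec_uniq (nzvec_lift _) Fmx.
Qed.

(** * Three fixed points *)

Definition mob_norm2 x0 x1 : mob :=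
  Mob (- (lift x0).2) (lift x0).1 (- (lift x1).2) (lift x1).1.

Lemma mob_norm2P x0 x1 : x0 != x1 ->
  [/\ mob_det (mob_norm2 x0 x1) != 0, mobf (mob_norm2 x0 x1) x0 = Some 0
    & mobf (mob_norm2 x0 x1) x1 = None].
Proof.
move=> x01; have det : mob_det (mob_norm2 x0 x1) = cross (lift x0) (lift x1).
  by rewrite /mob_det /cross /=; ring.
have m0 : mob_det (mob_norm2 x0 x1) != 0 by rewrite det cross_lift_neq0.
by split => //; rewrite mobfE; apply: point_eq_lift; rewrite ?nzvec_mobv ?nzvec_lift //;
  rewrite /mobv /cross /=; ring.
Qed.

Definition mob_norm3 x0 x1 x2 : mob :=
  Mob (- (cross (lift x1) (lift x2) * (lift x0).2)) (cross (lift x1) (lift x2) * (lift x0).1)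
      (- (cross (lift x0) (lift x2) * (lift x1).2)) (cross (lift x0) (lift x2) * (lift x1).1).

Lemma mob_norm3P x0 x1 x2 : x0 != x1 -> x0 != x2 -> x1 != x2 ->
  let m := mob_norm3 x0 x1 x2 in
  [/\ mob_det m != 0, mobf m x0 = Some 0, mobf m x1 = None & mobf m x2 = Some 1].
Proof.
move=> x01 x02 x12 m.
have det : mob_det m =
    cross (lift x1) (lift x2) * cross (lift x0) (lift x2) * cross (lift x0) (lift x1).
  by rewrite /m /mob_det /= /cross; ring.
have m0 : mob_det m != 0 by rewrite det !mulf_neq0 ?cross_lift_neq0.
by split => //; rewrite mobfE; apply: point_eq_lift; rewrite ?nzvec_mobv ?nzvec_lift //;
  rewrite /m /mobv /= /cross /=; ring.
Qed.

(* Lagrange interpolation: each coefficient times the product of the three cross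
   products is a combination of the three values of the form. *)
Lemma quad_form_eq0 (A B D : C) (v0 v1 v2 : vec) :
  cross v0 v1 != 0 -> cross v0 v2 != 0 -> cross v1 v2 != 0 ->
  A * v0.1 ^+ 2 + B * v0.1 * v0.2 + D * v0.2 ^+ 2 = 0 ->
  A * v1.1 ^+ 2 + B * v1.1 * v1.2 + D * v1.2 ^+ 2 = 0 ->
  A * v2.1 ^+ 2 + B * v2.1 * v2.2 + D * v2.2 ^+ 2 = 0 ->
  [/\ A = 0, B = 0 & D = 0].
Proof.
case: v0 v1 v2 => [x0 y0] [x1 y1] [x2 y2]; rewrite /cross /=.
pose Q (a b : C) := A * a ^+ 2 + B * a * b + D * b ^+ 2.
set d01 := x0 * y1 - y0 * x1; set d02 := x0 * y2 - y0 * x2; set d12 := x1 * y2 - y1 * x2.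
move=> n01 n02 n12; rewrite -/(Q x0 y0) -/(Q x1 y1) -/(Q x2 y2) => Q0 Q1 Q2.
have d0 : d01 * d02 * d12 != 0 by rewrite !mulf_neq0.
split; apply: (mulIf d0); rewrite mul0r.
- transitivity (y1 * y2 * d12 * Q x0 y0 - y0 * y2 * d02 * Q x1 y1 + y0 * y1 * d01 * Q x2 y2).
    by rewrite /Q /d01 /d02 /d12; ring.
  by rewrite Q0 Q1 Q2; ring.
- transitivity (- (d12 * (x1 * y2 + x2 * y1) * Q x0 y0) + d02 * (x0 * y2 + x2 * y0) * Q x1 y1
    - d01 * (x0 * y1 + x1 * y0) * Q x2 y2).
    by rewrite /Q /d01 /d02 /d12; ring.
  by rewrite Q0 Q1 Q2; ring.
- transitivity (x1 * x2 * d12 * Q x0 y0 - x0 * x2 * d02 * Q x1 y1 + x0 * x1 * d01 * Q x2 y2).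
    by rewrite /Q /d01 /d02 /d12; ring.
  by rewrite Q0 Q1 Q2; ring.
Qed.

Lemma mobf_fixed3 m (z : 'I_3 -> sph) : mob_det m != 0 -> injective z ->
  (forall i, mobf m (z i) = z i) -> mobf m = id.
Proof.
move=> m0 /inj3_neq [z01 z02 z12] mz.
have crossE v :
    cross (mobv m v) v = - mc m * v.1 ^+ 2 + (ma m - md m) * v.1 * v.2 + mb m * v.2 ^+ 2.
  by rewrite /cross /mobv /=; ring.
have [/eqP c0 /eqP ad b0] : [/\ - mc m = 0, ma m - md m = 0 & mb m = 0].
  by apply: (quad_form_eq0 (cross_lift_neq0 z01) (cross_lift_neq0 z02) (cross_lift_neq0 z12));
    rewrite -crossE cross_mobv_fixed.
rewrite oppr_eq0 in c0; rewrite subr_eq0 in ad.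
apply: functional_extensionality => x; rewrite mobfE; apply: point_eq_lift.
  by rewrite nzvec_mobv ?nzvec_lift.
by rewrite /cross /mobv /= (eqP c0) (eqP ad) b0; ring.
Qed.

Lemma multiplier0 p q : proper p q -> p`_0 = 0 -> q`_0 != 0 ->
  multiplier p q (Some 0) = p`_1 / q`_0.
Proof.
case=> hp hq _ p0 q0; rewrite /= /ratderiv hornerD hornerN !hornerM.
by rewrite !horner_deriv_size3 // !horner_size3 // p0; field.
Qed.

Lemma multiplier_inf p q : proper p q -> q`_2 = 0 -> multiplier p q None = q`_1 / p`_2.
Proof.
move=> pq q2; have p2 : p`_2 != 0 by have := proper_inf pq; rewrite q2 eqxx orbF.
rewrite /= /ratderiv /rev2 hornerD hornerN !hornerM.
rewrite -[_%:P + _ *: 'X + _ *: 'X^2]/(quadp _ _ _) !horner_deriv_quadp !horner_quadp.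
by rewrite q2; field.
Qed.

Lemma fixed_0inf1_coef p q : proper p q ->
  is_fixed p q (Some 0) -> is_fixed p q None -> is_fixed p q (Some 1) ->
  [/\ p`_0 = 0, q`_2 = 0, q`_0 != 0, p`_2 != q`_1 & p`_1 + p`_2 = q`_0 + q`_1].
Proof.
move=> pq /is_fixed_Some [q0 p0] /is_fixed_None q2 /is_fixed_Some [_ p1].
have [hp hq _] := pq; rewrite !horner_coef0 mul0r in q0 p0.
have pq1 : p`_1 + p`_2 = q`_0 + q`_1.
  by move: p1; rewrite !horner_size3 // p0 q2 !expr1n !mulr1 mul1r add0r addr0.
have p2 : p`_2 != 0 by have := proper_inf pq; rewrite q2 eqxx orbF.
split => //; apply/eqP => p2q1.
have p1q0 : p`_1 = q`_0 by apply: (addIr p`_2); rewrite pq1 p2q1.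
have u0 : nzvec (q`_0, - q`_1) by rewrite /nzvec q0.
have : hmap p q (q`_0, - q`_1) = (0, 0).
  by rewrite /hmap /hom /= p0 q2 p1q0 p2q1; congr pair; ring.
by move/(congr1 nzvec); rewrite (nzvec_hmap pq u0) /nzvec /= eqxx.
Qed.

(* The map with fixed points 0, oo, 1 and multipliers mu0 at 0 and muI at oo. *)
Definition std_num (mu0 muI : C) := quadp 0 mu0 ((1 - mu0) / (1 - muI)).
Definition std_den (mu0 muI : C) := quadp 1 (muI * ((1 - mu0) / (1 - muI))) 0.

Lemma normal_form_0inf1 p q : proper p q ->
  is_fixed p q (Some 0) -> is_fixed p q None -> is_fixed p q (Some 1) ->
  p = q`_0 *: std_num (multiplier p q (Some 0)) (multiplier p q None) /\
  q = q`_0 *: std_den (multiplier p q (Some 0)) (multiplier p q None).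
Proof.
move=> pq f0 fI f1; have [hp hq _] := pq.
have [p0 q2 q0 p2q1 pq1] := fixed_0inf1_coef pq f0 fI f1.
have p2 : p`_2 != 0 by have := proper_inf pq; rewrite q2 eqxx orbF.
have p1E : p`_1 = q`_0 + q`_1 - p`_2 by rewrite -pq1 addrK.
rewrite multiplier0 // multiplier_inf // !scale_quadp.
have p2q1' : p`_2 - q`_1 != 0 by rewrite subr_eq0.
split; [rewrite {1}(quadpE hp) p0 | rewrite {1}(quadpE hq) q2];
  by congr quadp; rewrite ?p1E; field; rewrite ?p2 ?p2q1' ?q0.
Qed.

Lemma ratmap_eq_0inf1 p q p' q' : proper p q -> proper p' q' ->
  [/\ is_fixed p q (Some 0), is_fixed p q None & is_fixed p q (Some 1)] ->
  [/\ is_fixed p' q' (Some 0), is_fixed p' q' None & is_fixed p' q' (Some 1)] ->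
  multiplier p q (Some 0) = multiplier p' q' (Some 0) ->
  multiplier p q None = multiplier p' q' None ->
  ratmap p q =1 ratmap p' q'.
Proof.
move=> pq pq' [f0 fI f1] [f0' fI' f1'] e0 eI x.
have [_ _ q0 _ _] := fixed_0inf1_coef pq f0 fI f1.
have [_ _ q0' _ _] := fixed_0inf1_coef pq' f0' fI' f1'.
have := normal_form_0inf1 pq f0 fI f1; have := normal_form_0inf1 pq' f0' fI' f1'.
rewrite -e0 -eI; move: (multiplier p q _) (multiplier p q _) (q`_0) (q'`_0) q0 q0'.
move=> mu0 muI c c' c0 c0' [-> ->] [-> ->].
by rewrite !ratmap_scalep ?size_quadp.
Qed.

Lemma ratmap_eq_fixed3 p q p' q' (z : 'I_3 -> sph) : proper p q -> proper p' q' ->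
  injective z -> (forall i, is_fixed p q (z i) /\ is_fixed p' q' (z i)) ->
  multiplier p q (z i0) = multiplier p' q' (z i0) ->
  multiplier p q (z i1) = multiplier p' q' (z i1) ->
  ratmap p q =1 ratmap p' q'.
Proof.
move=> pq pq' /inj3_neq [z01 z02 z12] fz e0 e1 x.
have [m0 mz0 mz1 mz2] := mob_norm3P z01 z02 z12; set m := mob_norm3 _ _ _ in m0 mz0 mz1 mz2.
have [mf mf'] := (morph_conj pq m0, morph_conj pq' m0).
rewrite -[ratmap p q x](mobf_adjK m0) -[ratmap p' q' x](mobf_adjK m0) mf mf'.
have [[[f0 f0'] [f1 f1']] [f2 f2']] := (fz i0, fz i1, fz i2).
congr (mobf _ _); apply: (ratmap_eq_0inf1 (proper_conj pq m0) (proper_conj pq' m0));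
  rewrite -?mz0 -?mz1 -?mz2 ?(multiplier_morph pq (proper_conj pq m0) m0 mf)
    ?(multiplier_morph pq' (proper_conj pq' m0) m0 mf') //.
all: by split; apply: is_fixed_morph.
Qed.

Lemma aut_mobf p q g : is_aut p q g -> exists2 m, mob_det m != 0 & g = mobf m.
Proof. by case=> /is_mobiusP [m m0 /functional_extensionality ->] _; exists m. Qed.

Lemma aut_morph p q g : is_aut p q g -> {morph g : x / ratmap p q x}.
Proof. by case. Qed.

Lemma mobf_aut p q m : mob_det m != 0 -> {morph mobf m : x / ratmap p q x} -> is_aut p q (mobf m).
Proof. by move=> m0 mf; split => //; apply/is_mobiusP; exists m. Qed.

Lemma mobf1E : mobf mob1 = id.
Proof. by apply: functional_extensionality => x; rewrite mobf1. Qed.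

Lemma aut_id p q : is_aut p q id.
Proof.
by rewrite -mobf1E; apply: mobf_aut; rewrite ?mob_det1 ?oner_neq0 // => x; rewrite !mobf1.
Qed.

Lemma aut_multiplier p q g x : proper p q -> is_aut p q g -> is_fixed p q x ->
  multiplier p q (g x) = multiplier p q x.
Proof.
move=> pq ag fx; have [m m0 gE] := aut_mobf ag.
by rewrite gE (multiplier_morph pq pq m0) // -gE; apply: aut_morph.
Qed.

Lemma aut_inj p q g : is_aut p q g -> injective g.
Proof. by case/aut_mobf => m m0 ->; apply: mobf_inj. Qed.

Lemma exists_mob3 (z w : 'I_3 -> sph) : injective z -> injective w ->
  exists2 m, mob_det m != 0 & forall i, mobf m (z i) = w i.
Proof.
move=> /inj3_neq [z01 z02 z12] /inj3_neq [w01 w02 w12].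
have [mz0 mz_0 mz_1 mz_2] := mob_norm3P z01 z02 z12.
have [mw0 mw_0 mw_1 mw_2] := mob_norm3P w01 w02 w12.
exists (mob_mul (mob_adj (mob_norm3 (w i0) (w i1) (w i2))) (mob_norm3 (z i0) (z i1) (z i2))).
  by rewrite mob_det_mul mob_det_adj mulf_neq0.
by move=> i; rewrite -mobf_mul //; case: (ord3P i) => ->;
  rewrite ?mz_0 ?mz_1 ?mz_2 -?mw_0 -?mw_1 -?mw_2 mobf_adjK.
Qed.

Section ThreeFixedPoints.
Variables (p q : {poly C}) (z : 'I_3 -> sph).
Hypotheses (pq : proper p q) (z_inj : injective z).
Hypothesis fixedP : forall x, is_fixed p q x <-> exists i, x = z i.

Let fixed_z i : is_fixed p q (z i). Proof. by apply/fixedP; exists i. Qed.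

Lemma aut_perm_fixed g : is_aut p q g -> forall i, exists j, g (z i) = z j.
Proof. by move=> ag i; apply/fixedP/(is_fixed_morph (aut_morph ag))/fixed_z. Qed.

Lemma aut_eq_fixed g g' : is_aut p q g -> is_aut p q g' ->
  (forall i, g (z i) = g' (z i)) -> g = g'.
Proof.
move=> /aut_mobf [m m0 ->] /aut_mobf [m' m'0 ->] e.
have n0 : mob_det (mob_mul (mob_adj m') m) != 0 by rewrite mob_det_mul mob_det_adj mulf_neq0.
have fixn i : mobf (mob_mul (mob_adj m') m) (z i) = z i by rewrite -mobf_mul // e mobf_adjK.
apply: functional_extensionality => x.
by rewrite -[mobf m x](mobf_Kadj m'0) (mobf_mul _ _ m0) (mobf_fixed3 n0 z_inj fixn).
Qed.

Lemma aut_multiplier_perm (s : 'S_3) g : is_aut p q g -> (forall i, g (z i) = z (s i)) ->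
  forall i, multiplier p q (z (s i)) = multiplier p q (z i).
Proof.
by move=> ag gs i; rewrite -gs aut_multiplier.
Qed.

Lemma aut_of_multiplier_perm (s : 'S_3) :
  (forall i, multiplier p q (z (s i)) = multiplier p q (z i)) ->
  exists g, is_aut p q g /\ forall i, g (z i) = z (s i).
Proof.
move=> ms; have zs_inj : injective (z \o s) by apply: inj_comp z_inj perm_inj.
have [m m0 mz] := exists_mob3 z_inj zs_inj.
exists (mobf m); split => //; apply: mobf_aut => // x.
have [mf pq'] := (morph_conj pq m0, proper_conj pq m0).
have zE j : z j = mobf m (z ((s^-1)%g j)) by rewrite mz /= permKV.
have fixed' j : is_fixed (conjp m p q) (conjq m p q) (z j).
  by rewrite zE; apply/(is_fixed_morph mf)/fixed_z.
have mult' j : multiplier (conjp m p q) (conjq m p q) (z j) = multiplier p q (z j).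
  by rewrite {1}zE (multiplier_morph pq pq' m0 mf) // -ms permKV.
by rewrite mf (ratmap_eq_fixed3 pq' pq z_inj) // => i; split.
Qed.

End ThreeFixedPoints.

(** * Two fixed points *)

Section TwoFixedPoints.
Variables p q : {poly C}.
Hypothesis pq : proper p q.
Hypothesis fixedP : forall x, is_fixed p q x <-> x = Some 0 \/ x = None.

Let hp : (size p <= 3)%N. Proof. by case: pq. Qed.
Let hq : (size q <= 3)%N. Proof. by case: pq. Qed.

Lemma fixed_0inf_coef : [/\ p`_0 = 0, q`_2 = 0, q`_0 != 0 & p`_2 != 0].
Proof.
have /is_fixed_Some [q0 p0] : is_fixed p q (Some 0) by apply/fixedP; left.
have /is_fixed_None q2 : is_fixed p q None by apply/fixedP; right.
rewrite !horner_coef0 mul0r in q0 p0; split => //.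
by have := proper_inf pq; rewrite q2 eqxx orbF.
Qed.

(* The fixed point equation is z ((p1 - q0) + (p2 - q1) z) = 0 and has no root besides 0,
   so exactly one of 0 and oo is a double fixed point, of multiplier 1. *)
Lemma multiplier_0_neq_inf : multiplier p q (Some 0) != multiplier p q None.
Proof.
have [p0 q2 q0 p2] := fixed_0inf_coef.
have nofix z : z != 0 -> (p`_1 - q`_0) + (p`_2 - q`_1) * z != 0.
  move=> z0; apply/negP => /eqP e.
  have : is_fixed p q (Some z).
    apply: is_fixed_of_eq => //; rewrite !horner_size3 // p0 q2; apply/eqP; rewrite -subr_eq0.
    by apply/eqP; transitivity (z * ((p`_1 - q`_0) + (p`_2 - q`_1) * z)); [ring | rewrite e mulr0].
  by case/fixedP => // -[/eqP]; rewrite (negbTE z0).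
rewrite multiplier0 // multiplier_inf // eqr_div //; apply/eqP => e.
have [p2q1|p2q1] := eqVneq p`_2 q`_1.
  have p1q0 : p`_1 = q`_0 by apply: (mulIf p2); rewrite e p2q1 mulrC.
  by have := nofix 1 (oner_neq0 _); rewrite p1q0 p2q1 !subrr mul0r addr0 eqxx.
have p1q0 : p`_1 = q`_0.
  apply/eqP/negPn/negP => p1q0.
  have z0 : - (p`_1 - q`_0) / (p`_2 - q`_1) != 0 by rewrite mulf_neq0 ?oppr_eq0 ?invr_eq0 ?subr_eq0.
  by have := nofix _ z0; rewrite mulrC divfK ?subr_eq0 // eqxx.
by move: p2q1; rewrite -(inj_eq (mulIf q0)) -e p1q0 mulrC eqxx.
Qed.

Lemma coprime_0inf : p`_1 * q`_1 != p`_2 * q`_0.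
Proof.
have [p0 q2 q0 p2] := fixed_0inf_coef; apply/eqP => e.
have [q1|q1] := eqVneq q`_1 0.
  by move/eqP: e; rewrite q1 mulr0 eq_sym mulf_eq0 (negbTE p2) (negbTE q0).
have u0 : nzvec (- q`_0, q`_1) by rewrite /nzvec q1 orbT.
have : hmap p q (- q`_0, q`_1) = (0, 0).
  rewrite /hmap /hom /= p0 q2; congr pair; last by ring.
  by transitivity (- q`_0 * (p`_1 * q`_1 - p`_2 * q`_0)); [ring | rewrite e subrr mulr0].
by move/(congr1 nzvec); rewrite (nzvec_hmap pq u0) /nzvec /= eqxx.
Qed.

Lemma aut_fixes_0inf g : is_aut p q g -> g (Some 0) = Some 0 /\ g None = None.
Proof.
move=> ag; have g_inj := aut_inj ag.
have gfix x : x = Some 0 \/ x = None -> g x = Some 0 \/ g x = None.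
  by move/fixedP => fx; apply/fixedP/(is_fixed_morph (aut_morph ag)).
have [g0|g0] := gfix (Some 0) (or_introl erefl).
  split => //; case: (gfix None (or_intror erefl)) => // gI.
  by move: (g_inj _ _ (etrans gI (esym g0))).
have f0 : is_fixed p q (Some 0) by apply/fixedP; left.
have := aut_multiplier pq ag f0; rewrite g0 => /eqP.
by rewrite eq_sym (negbTE multiplier_0_neq_inf).
Qed.

Lemma aut_0inf_id g : is_aut p q g -> g (Some 0) = Some 0 -> g None = None -> g = id.
Proof.
move=> ag; have [[a b c d] m0 gE] := aut_mobf ag; subst g.
move=> /mobf_fixed0 b0 /mobf_fixed_inf c0; rewrite /= in b0 c0.
have [p0 q2 _ _] := fixed_0inf_coef.
(* the z^2-coefficient of the commutation identity at u = (z, 1) *)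
have := quartic_coef_eq0 (e0 := 0) (e1 := 0)
  (e2 := a * d * (a - d) * (p`_1 * q`_1 - p`_2 * q`_0)) (e3 := 0) (e4 := 0).
case=> [z|_ _ /eqP e2 _ _].
  rewrite -[RHS](cross_of_morph pq pq m0 (aut_morph ag) (z, 1)).
  by rewrite /cross /mobv /hmap /hom /= b0 c0 p0 q2; ring.
have [a0 d0] : a != 0 /\ d != 0.
  by apply/andP; move: m0; rewrite /mob_det /= b0 mul0r subr0 mulf_eq0 negb_or.
move: e2; rewrite !mulf_eq0 (negbTE a0) (negbTE d0) !subr_eq0 (negbTE coprime_0inf) orbF.
move=> /eqP ad; rewrite -mobf1E; apply: (mobf_scale (k := a)) => // -[x y].
by rewrite /mobv /scalev /= b0 c0 ad; congr pair; ring.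
Qed.

End TwoFixedPoints.

(** * One fixed point *)

Section OneFixedPoint.
Variables p q : {poly C}.
Hypothesis pq : proper p q.
Hypothesis fixedP : forall x, is_fixed p q x <-> x = None.

(* The fixed points in C are the roots of p - X q, so this polynomial is constant. *)
Lemma fixed_inf_coef : [/\ q`_2 = 0, p`_1 = q`_0, p`_2 = q`_1 & p`_0 != 0].
Proof.
have /is_fixed_None q2 : is_fixed p q None by apply/fixedP.
have : size (p - 'X * q) == 1%N.
  apply/negPn/negP => /closed_rootP [z /rootP].
  rewrite hornerD hornerN hornerM hornerX => /eqP; rewrite subr_eq0 => /eqP pz.
  by have /fixedP := is_fixed_of_eq pq pz.
case/size_poly1P => c c0 e.
have coef i : p`_i - (if i == 0%N then 0 else q`_i.-1) = c%:P`_i by rewrite -e coefB coefXM.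
move: (coef 0%N) (coef 1%N) (coef 2%N); rewrite !coefC /= subr0 => -> /eqP + /eqP.
by rewrite !subr_eq0 => /eqP -> /eqP ->.
Qed.

Let p2_neq0 : p`_2 != 0.
Proof. by have [q2 _ _ _] := fixed_inf_coef; have := proper_inf pq; rewrite q2 eqxx orbF. Qed.

(* Here f(z) = z + p0 / (p1 + p2 z) is odd about its pole - p1 / p2, i.e. it commutes
   with the reflection z |-> - z - 2 p1 / p2 in that pole. *)
Definition sym_mob := Mob (- p`_2) (- (2 * p`_1)) 0 p`_2.

Lemma sym_mob_det : mob_det sym_mob != 0.
Proof. by rewrite /mob_det /= mulr0 subr0 mulNr oppr_eq0 mulf_neq0. Qed.

Lemma sym_mobE z : mobf sym_mob (Some z) = Some (- z - 2 * p`_1 / p`_2).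
Proof. by rewrite /mobf /= mul0r add0r (negbTE p2_neq0); congr Some; field. Qed.

Lemma sym_mob_aut : is_aut p q (mobf sym_mob).
Proof.
have [q2 p1 p2 _] := fixed_inf_coef.
apply: mobf_aut; first exact: sym_mob_det.
apply: (morph_of_hmap (k := - p`_2)); rewrite ?sym_mob_det ?oppr_eq0 ?p2_neq0 // => u.
by rewrite /hmap /mobv /scalev /hom /= q2 -p1 -p2; congr pair; ring.
Qed.

Lemma sym_mob_neq_id : mobf sym_mob <> id.
Proof.
move=> e; have : mobf sym_mob (Some 1) = Some 1 by rewrite e.
have : mobf sym_mob (Some 0) = Some 0 by rewrite e.
rewrite !sym_mobE => -[/eqP] + [/eqP]; rewrite oppr0 sub0r oppr_eq0 => /eqP ->.
by rewrite subr0 eq_sym -addr_eq0 -[1 + 1]/(2%:R : C) pnatr_eq0.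
Qed.

Lemma sym_mob_invol : mobf sym_mob \o mobf sym_mob = id.
Proof.
apply: functional_extensionality => x /=; rewrite mobf_mul ?sym_mob_det // -[RHS]mobf1.
congr (_ x); apply: (mobf_scale (k := p`_2 ^+ 2)); first by rewrite expf_neq0 ?p2_neq0.
by move=> u; rewrite /mobv /scalev /=; congr pair; ring.
Qed.

Lemma aut_inf_cases g : is_aut p q g -> g = id \/ g = mobf sym_mob.
Proof.
move=> ag; have gI : g None = None.
  by apply/fixedP/(is_fixed_morph (aut_morph ag)); apply/fixedP.
have [[a b c d] m0 gE] := aut_mobf ag; subst g; have /= c0 := mobf_fixed_inf gI.
have [q2 p1 p2 p0] := fixed_inf_coef.
have [a0 d0] : a != 0 /\ d != 0.
  by apply/andP; move: m0; rewrite /mob_det /= c0 mulr0 subr0 mulf_eq0 negb_or.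
(* the coefficients of the commutation identity at u = (z, 1) *)
have := quartic_coef_eq0 (e0 := d * p`_0 * (a * b * p`_2 + a * d * p`_1 - d ^+ 2 * p`_1))
  (e1 := d * p`_0 * p`_2 * (a ^+ 2 - d ^+ 2)) (e2 := 0) (e3 := 0) (e4 := 0).
case=> [z|/eqP E0 /eqP E1 _ _ _].
  rewrite -[RHS](cross_of_morph pq pq m0 (aut_morph ag) (z, 1)).
  by rewrite /cross /mobv /hmap /hom /= c0 q2 -p1 -p2; ring.
move: E1; rewrite !mulf_eq0 (negbTE d0) (negbTE p0) (negbTE p2_neq0) /= subr_sqr mulf_eq0.
rewrite subr_eq0 addr_eq0 => /orP [] /eqP ad; [left; rewrite -mobf1E | right].
  move: E0; rewrite ad !mulf_eq0 (negbTE d0) (negbTE p0) /=.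
  rewrite [X in X == 0](_ : _ = d * b * p`_2) ?mulf_eq0 ?(negbTE d0) ?(negbTE p2_neq0) ?orbF;
    last by ring.
  move=> /eqP b0; apply: (mobf_scale (k := d)) => // -[x y].
  by rewrite /mobv /scalev /= b0 c0; congr pair; ring.
move: E0; rewrite ad !mulf_eq0 (negbTE d0) (negbTE p0) /=.
rewrite [X in X == 0](_ : _ = - d * (b * p`_2 + 2 * d * p`_1)) ?mulf_eq0; last by ring.
rewrite oppr_eq0 (negbTE d0) /= addr_eq0 => /eqP bp2.
apply: (mobf_scale (k := d / p`_2)); first by rewrite mulf_neq0 ?invr_eq0 ?p2_neq0.
move=> -[x y]; rewrite /mobv /scalev /= c0.
have -> : b = - (2 * d * p`_1) / p`_2 by rewrite -bp2 mulfK ?p2_neq0.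
by congr pair; field; rewrite p2_neq0.
Qed.

Lemma aut_inf_involution : exists h, [/\ is_aut p q h, h <> id, h \o h = id &
  forall g, is_aut p q g <-> g = id \/ g = h].
Proof.
exists (mobf sym_mob); split; [exact: sym_mob_aut | exact: sym_mob_neq_id | exact: sym_mob_invol |].
by move=> g; split => [|[] ->]; [apply: aut_inf_cases | apply: aut_id | apply: sym_mob_aut].
Qed.

End OneFixedPoint.

(** * Transport along a conjugacy *)

Definition conjf n (g : sph -> sph) := mobf n \o g \o mobf (mob_adj n).

Lemma mobf_adj_adj m : mobf (mob_adj (mob_adj m)) = mobf m.
Proof. by case: m => a b c d; rewrite /mob_adj /= !opprK. Qed.

Section Conjugation.
Variables (n : mob) (p q P Q : {poly C}).
Hypothesis n0 : mob_det n != 0.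
Hypothesis nf : {morph mobf n : x / ratmap p q x >-> ratmap P Q x}.

Lemma conjfK : cancel (conjf n) (conjf (mob_adj n)).
Proof.
move=> g; apply: functional_extensionality => x.
by rewrite /conjf /= mobf_adj_adj !mobf_adjK.
Qed.

Lemma conjKf : cancel (conjf (mob_adj n)) (conjf n).
Proof.
move=> g; apply: functional_extensionality => x.
by rewrite /conjf /= mobf_adj_adj !mobf_Kadj.
Qed.

Lemma conjf_id : conjf n id = id.
Proof. by apply: functional_extensionality => x; rewrite /conjf /= mobf_Kadj. Qed.

Lemma conjf_comp g g' : conjf n (g \o g') = conjf n g \o conjf n g'.
Proof. by apply: functional_extensionality => x; rewrite /conjf /= mobf_adjK. Qed.

Lemma morph_adj : {morph mobf (mob_adj n) : x / ratmap P Q x >-> ratmap p q x}.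
Proof. by move=> x; rewrite -{1}[x](mobf_Kadj n0) -nf mobf_adjK. Qed.

Lemma is_fixed_conjE y : is_fixed P Q y <-> is_fixed p q (mobf (mob_adj n) y).
Proof.
split; first exact: is_fixed_morph morph_adj.
by move/(is_fixed_morph nf); rewrite mobf_Kadj.
Qed.

Lemma aut_conjf g : is_aut p q g -> is_aut P Q (conjf n g).
Proof.
move=> ag; have [m m0 gE] := aut_mobf ag; split.
  have na : mob_det (mob_adj n) != 0 by rewrite mob_det_adj.
  have mna : mob_det (mob_mul m (mob_adj n)) != 0 by rewrite mob_det_mul mulf_neq0.
  apply/is_mobiusP; exists (mob_mul n (mob_mul m (mob_adj n))).
    by rewrite mob_det_mul mulf_neq0.
  by move=> x; rewrite /conjf /= gE (mobf_mul _ _ na) (mobf_mul _ _ mna).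
by move=> x; rewrite /conjf /= morph_adj (aut_morph ag) nf.
Qed.

End Conjugation.

Lemma aut_conjfE n p q P Q g : mob_det n != 0 ->
  {morph mobf n : x / ratmap p q x >-> ratmap P Q x} ->
  is_aut p q g <-> is_aut P Q (conjf n g).
Proof.
move=> n0 nf; split; first exact: aut_conjf.
move/(aut_conjf (n := mob_adj n)); rewrite mob_det_adj conjfK //; apply=> //.
exact: morph_adj.
Qed.

Lemma has_card_aut_three_fixed p q (z : 'I_3 -> sph) : proper p q -> injective z ->
  (forall x, is_fixed p q x <-> exists i, x = z i) ->
  has_card (is_aut p q) #|perm_preserving (fun i => multiplier p q (z i))|.
Proof.
move=> pq z_inj fixedP; apply: (has_card_action z_inj (@aut_inj p q)).
- exact: aut_perm_fixed.
- exact: aut_eq_fixed.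
move=> s; split=> [[g [ag gs]]|/perm_preservingP]; last exact: aut_of_multiplier_perm.
by apply/perm_preservingP; apply: aut_multiplier_perm ag gs.
Qed.

Lemma aut_two_fixed p q : proper p q -> num_fixed p q 2 -> forall g, is_aut p q g <-> g = id.
Proof.
move=> pq [s [+ [+ fixedP]]]; case: s fixedP => [|x [|y []]] // fixedP /andP [+ _] _.
rewrite inE => xy.
have [n0 nx ny] := mob_norm2P xy; set n := mob_norm2 x y in n0 nx ny.
have [nf pq'] := (morph_conj pq n0, proper_conj pq n0).
have fixedP' y' : is_fixed (conjp n p q) (conjq n p q) y' <-> y' = Some 0 \/ y' = None.
  rewrite (is_fixed_conjE n0 nf) fixedP !inE.
  rewrite !(can2_eq (mobf_Kadj n0) (mobf_adjK n0)) nx ny.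
  by split => [/orP [] /eqP ->|[] ->]; rewrite ?eqxx ?orbT //; [left | right].
move=> g; rewrite (aut_conjfE _ n0 nf); split => [ag|->]; last first.
  by rewrite conjf_id //; apply: aut_id.
have [g0 gI] := aut_fixes_0inf pq' fixedP' ag.
by rewrite -(conjfK n0 g) (aut_0inf_id pq' fixedP' ag g0 gI) conjf_id ?mob_det_adj.
Qed.

Lemma aut_one_fixed p q : proper p q -> num_fixed p q 1 ->
  exists h, is_aut p q h /\ h <> id /\ h \o h = id /\
    forall g, is_aut p q g <-> g = id \/ g = h.
Proof.
move=> pq [s [_ [+ fixedP]]]; case: s fixedP => [|x []] // fixedP _.
pose w : sph := if x == None then Some 0 else None.
have wx : w != x by rewrite /w; case: (eqVneq x None) => [->|xN] //; rewrite eq_sym.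
have [n0 _ nx] := mob_norm2P wx; set n := mob_norm2 w x in n0 nx.
have [nf pq'] := (morph_conj pq n0, proper_conj pq n0).
have fixedP' y : is_fixed (conjp n p q) (conjq n p q) y <-> y = None.
  rewrite (is_fixed_conjE n0 nf) fixedP inE (can2_eq (mobf_Kadj n0) (mobf_adjK n0)) nx.
  by split => /eqP.
have [h [ah h1 hh autE]] := aut_inf_involution pq' fixedP'.
have n0' : mob_det (mob_adj n) != 0 by rewrite mob_det_adj.
exists (conjf (mob_adj n) h); split; first by rewrite (aut_conjfE _ n0 nf) conjKf.
split; first by move/(congr1 (conjf n)); rewrite conjKf // conjf_id.
split; first by rewrite -conjf_comp // hh conjf_id.
move=> g; rewrite (aut_conjfE _ n0 nf) autE.
split => [[] e|[] ->]; [left | right | left | right].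
- by rewrite -(conjfK n0 g) e conjf_id.
- by rewrite -e conjfK.
- exact: conjf_id.
- exact: conjKf.
Qed.

End RatTwo.

Unset Implicit Arguments.

Theorem mainTheorem8 (R : realType) (p q : {poly R[i]}) (hf : isRat2 p q) :
  (forall z : 'I_3 -> sphere R, injective z ->
     (forall x, is_fixed p q x <-> exists i, x = z i) ->
     let m := fun i => multiplier p q (z i) in
     (forall g, is_aut p q g -> forall i, exists j, g (z i) = z j) /\
     (forall g g', is_aut p q g -> is_aut p q g' ->
        (forall i, g (z i) = g' (z i)) -> g = g') /\
     (forall s : 'S_3,
        (exists g, is_aut p q g /\ forall i, g (z i) = z (s i)) <->
        (forall i, m (s i) = m i)) /\
     ((m i0 <> m i1 /\ m i1 <> m i2 /\ m i0 <> m i2) -> has_card (is_aut p q) 1) /\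
     ((m i0 = m i1 \/ m i1 = m i2 \/ m i0 = m i2) -> ~ (m i0 = m i1 /\ m i1 = m i2) ->
        has_card (is_aut p q) 2) /\
     ((m i0 = m i1 /\ m i1 = m i2) -> has_card (is_aut p q) 6)) /\
  (num_fixed p q 2 -> forall g, is_aut p q g <-> g = id) /\
  (num_fixed p q 1 ->
     exists h, is_aut p q h /\ h <> id /\ h \o h = id /\
       forall g, is_aut p q g <-> g = id \/ g = h).
Proof.
have pq := isRat2_proper hf.
split; last by split; [exact: aut_two_fixed | exact: aut_one_fixed].
move=> z z_inj fixedP m; have card := has_card_aut_three_fixed pq z_inj fixedP.
split; first exact: aut_perm_fixed.
split; first exact: aut_eq_fixed.
split.
  move=> s; split => [[g [ag gs]]|]; last exact: aut_of_multiplier_perm.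
  exact: aut_multiplier_perm ag gs.
split; first by case=> m01 [m12 m02]; rewrite -(card_perm_preserving3_distinct m01 m12 m02).
split; first by move=> two nconst; rewrite -(card_perm_preserving3_two two nconst).
by case=> m01 m12; rewrite -(card_perm_preserving3_const m01 m12).
Qed.
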